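(* Let $T$ be a filtered deterministic transducer with input category $\mathcal{C}$, output category $\mathcal{D}$, structure functor $F:\mathcal{C}\to\mathcal{D}^S$, primary input $\mathcal{C}$-signature $X\to Y$, auxiliary input $\mathcal{D}$-signatures $X_1\to Y_1,\dots,X_n\to Y_n$, output $\mathcal{D}$-signatures $X_1'\to Y_1',\dots,X_m'\to Y_m'$, input state space $S(F(X))$ and output state space $S(F(Y))$. Suppose that $S(F(Y))$ is finite, and that for every $x\in S(F(X))$ the linear coefficient $a$ of the degree $ax+b$ of every variable in $V_{F(X)}(x)$ is nonzero. Then there is a fixed integer $k$, not depending on $\deg(\alpha)$, such that for every $x\in S(F(X))$ and every primary input morphism $\alpha:X\to Y$ in $\mathcal{C}$, in each of the morphisms assigned by the output function $V_{F(\alpha)}(x)$ to the output signatures $X_j'\to Y_j'$ (which are variables at the state $S(F(\alpha))(x)$), the number of copies of the free generator corresponding to each auxiliary input $X_i\to Y_i$ is at most $k$.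
   Context: A filtered-morphism category is a locally small symmetric monoidal (here also copy-discard) category in which every morphism $f$ has a degree $\deg(f)\in\mathbb{N}$, identities have degree $0$, and $\deg(g\circ f)\le\deg(g)+\deg(f)$ (i.e. it is enriched over filtered sets, where a filtered set is a set with a function to $\mathbb{N}$ and morphisms are degree-non-increasing functions, with monoidal product the cartesian product with degrees added). Linear polynomials $ax+b$ with $a,b\in\mathbb{N}$ are partially ordered by $ax+b\le cx+d$ iff $a\le c$ and $b\le d$. Given a filtered-morphism category $\mathcal{D}$ and a list of signatures $X_i\to Y_i$ with degrees $a_ix+b_i$, the freely-generated $\mathbb{N}^2$-filtered category $\mathcal{D}[X_1\to Y_1,\dots]$ has the objects of $\mathcal{D}$, and morphisms built by composing and taking monoidal products of $\mathcal{D}$-morphisms and free generators $X_i\to Y_i$; the degree of such a morphism is the linear polynomial equal to the sum of the degrees $a_ix+b_i$ of the generator occurrences plus the ($\mathcal{D}$-)degrees of the maximal $\mathcal{D}$-parts (as constants). The filtered state category $\mathcal{D}^S$: an object $A$ consists of a set $S(A)$ (state space) and, for each $s\in S(A)$, a finite ordered list $V_A(s)$ of variables, i.e. pairs of $\mathcal{D}$-objects written $X\to Y$, each with a degree $ax+b$, $a,b\in\mathbb{N}$. A morphism $f:A\to B$ of degree $\ell\in\mathbb{N}$ consists of a function $S(f):S(A)\to S(B)$ (state transition) and, for each $s\in S(A)$, an output function $V_f(s)$ assigning to each variable $X'\to Y'$ at $S(f)(s)$ of degree $a'x+b'$ a morphism $X'\to Y'$ in the free $\mathbb{N}^2$-filtered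 category over $\mathcal{D}$ generated by the variables at $s$ (with their degrees), of degree at most $a'x+(a'\ell+b')$. Substituting actual $\mathcal{D}$-morphisms for the generators gives output $\mathcal{D}$-morphisms. Composition composes state transitions and substitutes output functions; the monoidal product takes products of state spaces and concatenates variable lists. A filtered functor is a functor $F$ between filtered-morphism categories with $\deg F(\alpha)\le\deg(\alpha)$ for all morphisms $\alpha$. A filtered deterministic transducer consists of filtered-morphism copy-discard categories $\mathcal{C}$ (input) and $\mathcal{D}$ (output), a primary input $\mathcal{C}$-signature $X\to Y$, auxiliary input $\mathcal{D}$-signatures $X_1\to Y_1,\dots,X_n\to Y_n$, output $\mathcal{D}$-signatures $X'_1\to Y'_1,\dots,X'_m\to Y'_m$, and a strong monoidal filtered functor $F:\mathcal{C}\to\mathcal{D}^S$ such that for every $s\in S(F(X))$ the variables at $s$ form a prefix of $X_1\to Y_1,\dots,X_n\to Y_n$, and for every $t\in S(F(Y))$ the list $X'_1\to Y'_1,\dots,X'_m\to Y'_m$ is a prefix of the variables at $t$. Given an input state $s\in S(F(X))$, a primary input $\alpha:X\to Y$ and auxiliary input morphisms $\beta_i:X_i\to Y_i$, the transducer outputs the state $S(F(\alpha))(s)$ and, for each output signature, the morphism assigned by $V_{F(\alpha)}(s)$ with the generators replaced by the $\beta_i$. *)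

From Stdlib Require Import List Arith PeanoNat.
Import ListNotations.

Set Implicit Arguments.

Record CDData := mkCD {
  cob : Type;
  chom : cob -> cob -> Type;
  cdeg : forall A B : cob, chom A B -> nat;
  cid : forall A : cob, chom A A;
  ccomp : forall A B C : cob, chom B C -> chom A B -> chom A C;
  ctens_ob : cob -> cob -> cob;
  cunit : cob;
  ctens : forall A B A' B' : cob,
      chom A B -> chom A' B' -> chom (ctens_ob A A') (ctens_ob B B');
  cassoc : forall A B C : cob,
      chom (ctens_ob A (ctens_ob B C)) (ctens_ob (ctens_ob A B) C);
  cassoc_inv : forall A B C : cob,
      chom (ctens_ob (ctens_ob A B) C) (ctens_ob A (ctens_ob B C));
  clunit : forall A : cob, chom (ctens_ob cunit A) A;
  clunit_inv : forall A : cob, chom A (ctens_ob cunit A);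
  crunit : forall A : cob, chom (ctens_ob A cunit) A;
  crunit_inv : forall A : cob, chom A (ctens_ob A cunit);
  cswap : forall A B : cob, chom (ctens_ob A B) (ctens_ob B A);
  ccopy : forall A : cob, chom A (ctens_ob A A);
  cdel : forall A : cob, chom A cunit
}.

Arguments chom {c} _ _.
Arguments cdeg {c A B} _.
Arguments cid {c} A.
Arguments ccomp {c A B C} _ _.
Arguments ctens {c A B A' B'} _ _.
Arguments ctens_ob {c} _ _.
Arguments cunit {c}.
Arguments cassoc {c} A B C.
Arguments cassoc_inv {c} A B C.
Arguments clunit {c} A.
Arguments clunit_inv {c} A.
Arguments crunit {c} A.
Arguments crunit_inv {c} A.
Arguments cswap {c} A B.
Arguments ccopy {c} A.
Arguments cdel {c} A.

Record CD_laws (D : CDData) : Prop := {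
  comp_id_l : forall (A B : cob D) (f : chom A B), ccomp (cid B) f = f;
  comp_id_r : forall (A B : cob D) (f : chom A B), ccomp f (cid A) = f;
  comp_assoc : forall (A B C E : cob D) (h : chom C E) (g : chom B C) (f : chom A B),
      ccomp h (ccomp g f) = ccomp (ccomp h g) f;
  deg_id : forall A : cob D, cdeg (cid A) = 0;
  deg_comp : forall (A B C : cob D) (g : chom B C) (f : chom A B),
      cdeg (ccomp g f) <= cdeg g + cdeg f;
  deg_tens : forall (A B A' B' : cob D) (f : chom A B) (g : chom A' B'),
      cdeg (ctens f g) <= cdeg f + cdeg g;
  deg_assoc : forall A B C : cob D, cdeg (cassoc A B C) = 0;
  deg_assoc_inv : forall A B C : cob D, cdeg (cassoc_inv A B C) = 0;
  deg_lunit : forall A : cob D, cdeg (clunit A) = 0;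
  deg_lunit_inv : forall A : cob D, cdeg (clunit_inv A) = 0;
  deg_runit : forall A : cob D, cdeg (crunit A) = 0;
  deg_runit_inv : forall A : cob D, cdeg (crunit_inv A) = 0;
  deg_swap : forall A B : cob D, cdeg (cswap A B) = 0;
  tens_id : forall A B : cob D, ctens (cid A) (cid B) = cid (ctens_ob A B);
  tens_comp : forall (A B C A' B' C' : cob D) (g : chom B C) (f : chom A B)
      (g' : chom B' C') (f' : chom A' B'),
      ctens (ccomp g f) (ccomp g' f') = ccomp (ctens g g') (ctens f f');
  assoc_iso1 : forall A B C : cob D, ccomp (cassoc_inv A B C) (cassoc A B C) = cid _;
  assoc_iso2 : forall A B C : cob D, ccomp (cassoc A B C) (cassoc_inv A B C) = cid _;
  lunit_iso1 : forall A : cob D, ccomp (clunit_inv A) (clunit A) = cid _;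
  lunit_iso2 : forall A : cob D, ccomp (clunit A) (clunit_inv A) = cid _;
  runit_iso1 : forall A : cob D, ccomp (crunit_inv A) (crunit A) = cid _;
  runit_iso2 : forall A : cob D, ccomp (crunit A) (crunit_inv A) = cid _;
  swap_invol : forall A B : cob D, ccomp (cswap B A) (cswap A B) = cid _;
  assoc_nat : forall (A B C A' B' C' : cob D) (f : chom A A') (g : chom B B') (h : chom C C'),
      ccomp (ctens (ctens f g) h) (cassoc A B C) = ccomp (cassoc A' B' C') (ctens f (ctens g h));
  lunit_nat : forall (A B : cob D) (f : chom A B),
      ccomp f (clunit A) = ccomp (clunit B) (ctens (cid cunit) f);
  runit_nat : forall (A B : cob D) (f : chom A B),
      ccomp f (crunit A) = ccomp (crunit B) (ctens f (cid cunit));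
  swap_nat : forall (A B A' B' : cob D) (f : chom A A') (g : chom B B'),
      ccomp (ctens g f) (cswap A B) = ccomp (cswap A' B') (ctens f g);
  pentagon : forall A B C E : cob D,
      ccomp (cassoc (ctens_ob A B) C E) (cassoc A B (ctens_ob C E))
      = ccomp (ctens (cassoc A B C) (cid E))
          (ccomp (cassoc A (ctens_ob B C) E) (ctens (cid A) (cassoc B C E)));
  triangle : forall A B : cob D,
      ccomp (ctens (crunit A) (cid B)) (cassoc A cunit B) = ctens (cid A) (clunit B);
  hexagon : forall A B C : cob D,
      ccomp (cassoc C A B) (ccomp (cswap (ctens_ob A B) C) (cassoc A B C))
      = ccomp (ctens (cswap A C) (cid B))
          (ccomp (cassoc A C B) (ctens (cid A) (cswap B C)));
  copy_counit_l : forall A : cob D,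
      ccomp (clunit A) (ccomp (ctens (cdel A) (cid A)) (ccopy A)) = cid A;
  copy_counit_r : forall A : cob D,
      ccomp (crunit A) (ccomp (ctens (cid A) (cdel A)) (ccopy A)) = cid A;
  copy_coassoc : forall A : cob D,
      ccomp (cassoc A A A) (ccomp (ctens (cid A) (ccopy A)) (ccopy A))
      = ccomp (ctens (ccopy A) (cid A)) (ccopy A);
  copy_cocomm : forall A : cob D, ccomp (cswap A A) (ccopy A) = ccopy A;
  copy_tens : forall A B : cob D,
      ccopy (ctens_ob A B)
      = ccomp (cassoc A B (ctens_ob A B))
         (ccomp (ctens (cid A) (cassoc_inv B A B))
          (ccomp (ctens (cid A) (ctens (cswap A B) (cid B)))
           (ccomp (ctens (cid A) (cassoc A B B))
            (ccomp (cassoc_inv A A (ctens_ob B B))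
                   (ctens (ccopy A) (ccopy B))))));
  del_tens : forall A B : cob D,
      cdel (ctens_ob A B) = ccomp (clunit cunit) (ctens (cdel A) (cdel B));
  copy_unit : ccopy (@cunit D) = clunit_inv cunit;
  del_unit : cdel (@cunit D) = cid cunit
}.

Record FCDCat := { fc_data :> CDData; fc_laws : CD_laws fc_data }.

(* Linear polynomials a x + b, represented as (a, b), with the componentwise order *)
Definition lpoly := (nat * nat)%type.
Definition lpoly_le (p q : lpoly) : Prop := fst p <= fst q /\ snd p <= snd q.
Definition lpoly_add (p q : lpoly) : lpoly := (fst p + fst q, snd p + snd q).

(* A variable / signature X -> Y with degree a x + b. *)
Record Var (D : CDData) := mkVar { vsrc : cob D; vtgt : cob D; va : nat; vb : nat }.
Arguments mkVar {D} _ _ _ _.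

Definition dflt_var (D : CDData) : Var D := mkVar (@cunit D) (@cunit D) 0 0.

Inductive term (D : CDData) : Type :=
| tmD : forall A B : cob D, chom A B -> term D
| tmGen : nat -> term D
| tmComp : term D -> term D -> term D                 (* tmComp g f = g o f *)
| tmTens : term D -> term D -> term D.
Arguments tmGen {D} _.
Arguments tmD {D A B} _.

Section Free.
Variable D : CDData.
Variable ctx : list (Var D).

Inductive has_type : term D -> cob D -> cob D -> Prop :=
| ht_D : forall A B (f : chom A B), has_type (tmD f) A B
| ht_Gen : forall i, i < length ctx ->
    has_type (tmGen i) (vsrc (nth i ctx (dflt_var D))) (vtgt (nth i ctx (dflt_var D)))
| ht_Comp : forall t u A B C, has_type t B C -> has_type u A B -> has_type (tmComp t u) A C
| ht_Tens : forall t u A B A' B', has_type t A B -> has_type u A' B' ->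
    has_type (tmTens t u) (ctens_ob A A') (ctens_ob B B').

(* Congruence presenting the free symmetric monoidal category over D
   (D-operations agree with D's, category laws, functoriality of the tensor,
   naturality of the structural isomorphisms of D). *)
Inductive tequiv : term D -> term D -> Prop :=
| te_refl : forall t, tequiv t t
| te_sym : forall t u, tequiv t u -> tequiv u t
| te_trans : forall t u v, tequiv t u -> tequiv u v -> tequiv t v
| te_comp_cong : forall t t' u u', tequiv t t' -> tequiv u u' ->
    tequiv (tmComp t u) (tmComp t' u')
| te_tens_cong : forall t t' u u', tequiv t t' -> tequiv u u' ->
    tequiv (tmTens t u) (tmTens t' u')
| te_D_comp : forall A B C (g : chom B C) (f : chom A B),
    tequiv (tmComp (tmD g) (tmD f)) (tmD (ccomp g f))
| te_D_tens : forall A B A' B' (f : chom A B) (g : chom A' B'),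
    tequiv (tmTens (tmD f) (tmD g)) (tmD (ctens f g))
| te_id_l : forall t A B, has_type t A B -> tequiv (tmComp (tmD (cid B)) t) t
| te_id_r : forall t A B, has_type t A B -> tequiv (tmComp t (tmD (cid A))) t
| te_assoc : forall t u v, tequiv (tmComp t (tmComp u v)) (tmComp (tmComp t u) v)
| te_interchange : forall t1 t2 u1 u2,
    tequiv (tmComp (tmTens t1 t2) (tmTens u1 u2)) (tmTens (tmComp t1 u1) (tmComp t2 u2))
| te_assoc_nat : forall t1 t2 t3 A1 B1 A2 B2 A3 B3,
    has_type t1 A1 B1 -> has_type t2 A2 B2 -> has_type t3 A3 B3 ->
    tequiv (tmComp (tmTens (tmTens t1 t2) t3) (tmD (cassoc A1 A2 A3)))
           (tmComp (tmD (cassoc B1 B2 B3)) (tmTens t1 (tmTens t2 t3)))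
| te_assoc_inv_nat : forall t1 t2 t3 A1 B1 A2 B2 A3 B3,
    has_type t1 A1 B1 -> has_type t2 A2 B2 -> has_type t3 A3 B3 ->
    tequiv (tmComp (tmTens t1 (tmTens t2 t3)) (tmD (cassoc_inv A1 A2 A3)))
           (tmComp (tmD (cassoc_inv B1 B2 B3)) (tmTens (tmTens t1 t2) t3))
| te_lunit_nat : forall t A B, has_type t A B ->
    tequiv (tmComp t (tmD (clunit A))) (tmComp (tmD (clunit B)) (tmTens (tmD (cid cunit)) t))
| te_lunit_inv_nat : forall t A B, has_type t A B ->
    tequiv (tmComp (tmTens (tmD (cid cunit)) t) (tmD (clunit_inv A))) (tmComp (tmD (clunit_inv B)) t)
| te_runit_nat : forall t A B, has_type t A B ->
    tequiv (tmComp t (tmD (crunit A))) (tmComp (tmD (crunit B)) (tmTens t (tmD (cid cunit))))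
| te_runit_inv_nat : forall t A B, has_type t A B ->
    tequiv (tmComp (tmTens t (tmD (cid cunit))) (tmD (crunit_inv A))) (tmComp (tmD (crunit_inv B)) t)
| te_swap_nat : forall t1 t2 A1 B1 A2 B2,
    has_type t1 A1 B1 -> has_type t2 A2 B2 ->
    tequiv (tmComp (tmTens t2 t1) (tmD (cswap A1 A2)))
           (tmComp (tmD (cswap B1 B2)) (tmTens t1 t2)).

Fixpoint tdeg (t : term D) : lpoly :=
  match t with
  | tmD f => (0, cdeg f)
  | tmGen i => (va (nth i ctx (dflt_var D)), vb (nth i ctx (dflt_var D)))
  | tmComp t u => lpoly_add (tdeg t) (tdeg u)
  | tmTens t u => lpoly_add (tdeg t) (tdeg u)
  end.
End Free.

Fixpoint gen_count (D : CDData) (i : nat) (t : term D) : nat :=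
  match t with
  | tmD _ => 0
  | tmGen j => if Nat.eqb i j then 1 else 0
  | tmComp t u => gen_count i t + gen_count i u
  | tmTens t u => gen_count i t + gen_count i u
  end.

Fixpoint tsubst (D : CDData) (sigma : nat -> term D) (t : term D) : term D :=
  match t with
  | tmD f => tmD f
  | tmGen i => sigma i
  | tmComp t u => tmComp (tsubst sigma t) (tsubst sigma u)
  | tmTens t u => tmTens (tsubst sigma t) (tsubst sigma u)
  end.
Definition trename (D : CDData) (r : nat -> nat) (t : term D) : term D :=
  tsubst (fun i => tmGen (r i)) t.

Record SObj (D : CDData) := mkSObj { St : Type; SV : St -> list (Var D) }.

(* Raw data of a morphism: state transition and output function
   (output for the j-th variable at the new state). *)
Record SHom (D : CDData) (A B : SObj D) := mkSHom {
  smap : St A -> St B;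
  sout : St A -> nat -> term D }.
Arguments mkSHom {D A B} _ _.
Arguments smap {D A B} _ _.
Arguments sout {D A B} _ _ _.

Section StateCat.
Variable D : CDData.

Definition out_var (A B : SObj D) (f : SHom A B) (s : St A) (j : nat) : Var D :=
  nth j (SV B (smap f s)) (dflt_var D).

Definition S_wt (A B : SObj D) (f : SHom A B) : Prop :=
  forall (s : St A) (j : nat), j < length (SV B (smap f s)) ->
    has_type (SV A s) (sout f s j) (vsrc (out_var f s j)) (vtgt (out_var f s j)).

Definition S_bounded (A B : SObj D) (f : SHom A B) (l : nat) : Prop :=
  forall (s : St A) (j : nat), j < length (SV B (smap f s)) ->
    lpoly_le (tdeg (SV A s) (sout f s j))
             (va (out_var f s j), va (out_var f s j) * l + vb (out_var f s j)).

Definition S_equiv (A B : SObj D) (f g : SHom A B) : Prop :=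
  (forall s, smap f s = smap g s) /\
  (forall s j, j < length (SV B (smap f s)) -> tequiv (SV A s) (sout f s j) (sout g s j)).

Definition S_deg_le (A B : SObj D) (f : SHom A B) (l : nat) : Prop :=
  exists g : SHom A B, S_equiv f g /\ S_wt g /\ S_bounded g l.

Definition S_id (A : SObj D) : SHom A A := mkSHom (fun s => s) (fun _ j => tmGen j).

Definition S_comp (A B C : SObj D) (g : SHom B C) (f : SHom A B) : SHom A C :=
  mkSHom (fun s => smap g (smap f s))
         (fun s j => tsubst (sout f s) (sout g (smap f s) j)).

Definition S_tens_ob (A B : SObj D) : SObj D :=
  @mkSObj D (St A * St B)%type (fun p => SV A (fst p) ++ SV B (snd p)).

Definition S_unit : SObj D := @mkSObj D unit (fun _ => []).

Definition S_tens (A B A' B' : SObj D) (f : SHom A B) (g : SHom A' B') :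
    SHom (S_tens_ob A A') (S_tens_ob B B') :=
  @mkSHom D (S_tens_ob A A') (S_tens_ob B B') (fun p : St A * St A' => (smap f (fst p), smap g (snd p)))
    (fun (p : St A * St A') j =>
       let n := length (SV B (smap f (fst p))) in
       if Nat.ltb j n then sout f (fst p) j
       else trename (fun i => i + length (SV A (fst p))) (sout g (snd p) (j - n))).

Definition S_relabel (A B : SObj D) (h : St A -> St B) : SHom A B :=
  mkSHom h (fun _ j => tmGen j).

Definition S_assoc (A B C : SObj D) :
    SHom (S_tens_ob A (S_tens_ob B C)) (S_tens_ob (S_tens_ob A B) C) :=
  @S_relabel (S_tens_ob A (S_tens_ob B C)) (S_tens_ob (S_tens_ob A B) C) (fun p : St A * (St B * St C) => ((fst p, fst (snd p)), snd (snd p))).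
Definition S_lunit (A : SObj D) : SHom (S_tens_ob S_unit A) A :=
  @S_relabel (S_tens_ob S_unit A) A (fun p : unit * St A => snd p).
Definition S_runit (A : SObj D) : SHom (S_tens_ob A S_unit) A :=
  @S_relabel (S_tens_ob A S_unit) A (fun p : St A * unit => fst p).
End StateCat.

Record SFunctor (C D : FCDCat) := mkSFunctor {
  Fob : cob C -> SObj D;
  Fhom : forall A B : cob C, chom A B -> SHom (Fob A) (Fob B);
  Fphi : forall A B : cob C,
      SHom (S_tens_ob (Fob A) (Fob B)) (Fob (ctens_ob A B));
  Fphi_inv : forall A B : cob C,
      SHom (Fob (ctens_ob A B)) (S_tens_ob (Fob A) (Fob B));
  Fphi0 : SHom (S_unit D) (Fob cunit);
  Fphi0_inv : SHom (Fob cunit) (S_unit D)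
}.
Arguments Fob {C D} _ _.
Arguments Fhom {C D} _ {A B} _.
Arguments Fphi {C D} _ _ _.
Arguments Fphi_inv {C D} _ _ _.
Arguments Fphi0 {C D} _.
Arguments Fphi0_inv {C D} _.

Record strong_monoidal_filtered (C D : FCDCat) (F : SFunctor C D) : Prop := {
  F_wt : forall (A B : cob C) (f : chom A B), S_wt (Fhom F f);
  Fphi_wt : forall A B : cob C, S_wt (Fphi F A B);
  Fphi_inv_wt : forall A B : cob C, S_wt (Fphi_inv F A B);
  Fphi0_wt : S_wt (Fphi0 F);
  Fphi0_inv_wt : S_wt (Fphi0_inv F);
  F_filtered : forall (A B : cob C) (f : chom A B), S_deg_le (Fhom F f) (cdeg f);
  F_id : forall A : cob C, S_equiv (Fhom F (cid A)) (S_id _);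
  F_comp : forall (A B E : cob C) (g : chom B E) (f : chom A B),
      S_equiv (Fhom F (ccomp g f)) (S_comp (Fhom F g) (Fhom F f));
  Fphi_iso1 : forall A B : cob C, S_equiv (S_comp (Fphi_inv F A B) (Fphi F A B)) (S_id _);
  Fphi_iso2 : forall A B : cob C, S_equiv (S_comp (Fphi F A B) (Fphi_inv F A B)) (S_id _);
  Fphi0_iso1 : S_equiv (S_comp (Fphi0_inv F) (Fphi0 F)) (S_id _);
  Fphi0_iso2 : S_equiv (S_comp (Fphi0 F) (Fphi0_inv F)) (S_id _);
  Fphi_nat : forall (A B A' B' : cob C) (f : chom A A') (g : chom B B'),
      S_equiv (S_comp (Fphi F A' B') (S_tens (Fhom F f) (Fhom F g)))
              (S_comp (Fhom F (ctens f g)) (Fphi F A B));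
  F_assoc_coh : forall A B E : cob C,
      S_equiv (S_comp (Fhom F (cassoc A B E))
                 (S_comp (Fphi F A (ctens_ob B E)) (S_tens (S_id _) (Fphi F B E))))
              (S_comp (Fphi F (ctens_ob A B) E)
                 (S_comp (S_tens (Fphi F A B) (S_id _)) (S_assoc _ _ _)));
  F_lunit_coh : forall A : cob C,
      S_equiv (S_comp (Fhom F (clunit A))
                 (S_comp (Fphi F cunit A) (S_tens (Fphi0 F) (S_id _))))
              (S_lunit _);
  F_runit_coh : forall A : cob C,
      S_equiv (S_comp (Fhom F (crunit A))
                 (S_comp (Fphi F A cunit) (S_tens (S_id _) (Fphi0 F))))
              (S_runit _)
}.

Definition is_prefix (T : Type) (l1 l2 : list T) : Prop := exists l3, l2 = l1 ++ l3.

Definition var_sig (D : CDData) (v : Var D) : (cob D * cob D)%type := (vsrc v, vtgt v).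

Record FDTransducer := mkFDT {
  tr_C : FCDCat;
  tr_D : FCDCat;
  tr_X : cob tr_C;
  tr_Y : cob tr_C;
  tr_aux : list (cob tr_D * cob tr_D);
  tr_out : list (cob tr_D * cob tr_D);
  tr_F : SFunctor tr_C tr_D;
  tr_F_sm : strong_monoidal_filtered tr_F;
  tr_in_prefix : forall s : St (Fob tr_F tr_X),
      is_prefix (map (@var_sig tr_D) (SV _ s)) tr_aux;
  tr_out_prefix : forall t : St (Fob tr_F tr_Y),
      is_prefix tr_out (map (@var_sig tr_D) (SV _ t))
}.

From Stdlib Require Import List Arith Lia.

Set Implicit Arguments.

(* Proof idea: a morphism of D^S of degree l assigns to an output variable of
   degree a'x + b' a term of degree at most a'x + (a'l + b'), so only the
   constant coefficient depends on l.  When every generator has a nonzero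
   linear coefficient, each of its occurrences adds at least 1 to the linear
   coefficient of the term, hence occurs at most a' times.  The relation
   presenting the free category preserves occurrence counts, and finiteness of
   S(F(Y)) bounds a' uniformly over the output states. *)

Section GeneratorCount.
Variable D : CDData.
Variable ctx : list (Var D).

Lemma gen_count_tequiv (i : nat) (t u : term D) :
  tequiv ctx t u -> gen_count i t = gen_count i u.
Proof. induction 1; simpl; lia. Qed.

Lemma gen_count_le_tdeg (i : nat) (t : term D) (A B : cob D) :
  (forall v, In v ctx -> va v <> 0) ->
  has_type ctx t A B -> gen_count i t <= fst (tdeg ctx t).
Proof.
  intros Hctx Ht; induction Ht as [| k Hk | |]; simpl; try lia.
  destruct (Nat.eqb i k); [|lia].
  enough (va (nth k ctx (dflt_var D)) <> 0) by lia.
  apply Hctx, nth_In; exact Hk.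
Qed.

End GeneratorCount.

Lemma le_list_max (l : list nat) (n : nat) : In n l -> n <= list_max l.
Proof.
  intros Hn.
  assert (Hall : Forall (fun k => k <= list_max l) l) by (apply list_max_le; lia).
  exact (proj1 (Forall_forall _ l) Hall n Hn).
Qed.

Definition max_lin_coeff (D : CDData) (vs : list (Var D)) : nat :=
  list_max (map (@va D) vs).

Lemma gen_count_le_out_va (D : CDData) (A B : SObj D) (f : SHom A B) (l : nat)
    (s : St A) (j i : nat) :
  (forall v, In v (SV A s) -> va v <> 0) ->
  S_deg_le f l -> j < length (SV B (smap f s)) ->
  gen_count i (sout f s j) <= va (out_var f s j).
Proof.
  intros Hlin [g [[Hmap Hout] [Hwt Hbd]]] Hj.
  assert (Hjg : j < length (SV B (smap g s))) by (rewrite <- Hmap; exact Hj).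
  rewrite (gen_count_tequiv i (Hout s j Hj)).
  destruct (Hbd s j Hjg) as [Hlead _].
  unfold out_var in *; rewrite Hmap.
  eapply Nat.le_trans; [exact (gen_count_le_tdeg i Hlin (Hwt s j Hjg)) | exact Hlead].
Qed.

Lemma out_var_va_le_max (D : CDData) (A B : SObj D) (f : SHom A B) (s : St A) (j : nat) :
  j < length (SV B (smap f s)) ->
  va (out_var f s j) <= max_lin_coeff (SV B (smap f s)).
Proof.
  intros Hj; apply le_list_max, in_map, nth_In; exact Hj.
Qed.

Lemma tr_out_index_lt (T : FDTransducer) (t : St (Fob (tr_F T) (tr_Y T))) (j : nat) :
  j < length (tr_out T) -> j < length (SV _ t).
Proof.
  destruct (tr_out_prefix T t) as [rest Ht].
  apply (f_equal (@length _)) in Ht.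
  rewrite length_map, length_app in Ht; lia.
Qed.

Theorem proposition3p11 (T : FDTransducer)
  (Hfin : exists l : list (St (Fob (tr_F T) (tr_Y T))), forall t, In t l)
  (Hlin : forall (x : St (Fob (tr_F T) (tr_X T))) (v : Var (tr_D T)),
      In v (SV _ x) -> va v <> 0) :
  exists k : nat,
    forall (x : St (Fob (tr_F T) (tr_X T))) (alpha : chom (tr_X T) (tr_Y T))
           (j i : nat),
      j < length (tr_out T) -> i < length (tr_aux T) ->
      gen_count i (sout (Fhom (tr_F T) alpha) x j) <= k.
Proof.
  destruct Hfin as [states Hstates].
  exists (list_max (map (fun t => max_lin_coeff (SV _ t)) states)).
  intros x alpha j i Hj _.
  set (Falpha := Fhom (tr_F T) alpha).
  assert (Hjt : j < length (SV _ (smap Falpha x))) by (apply tr_out_index_lt; exact Hj).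
  eapply Nat.le_trans.
  { exact (gen_count_le_out_va x i (Hlin x) (F_filtered (tr_F_sm T) _ _ alpha) Hjt). }
  eapply Nat.le_trans; [exact (out_var_va_le_max Falpha x Hjt) |].
  apply le_list_max, (in_map (fun t => max_lin_coeff (SV _ t))), Hstates.
Qed.
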